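(* Let $\delta>0$ and let $g:[\ell,r]\to\mathbb{R}$ be a function with $|g(x)+\frac12x^2|\leq\frac14\delta^2$ for all $x\in[\ell,r]$. Let $x_0\in[\ell+3\delta,r-3\delta]$. Let $h_1$ be the concave majorant of $g$ on $[\ell,r]$ and $h_2$ the concave majorant of $g$ on $[x_0-3\delta,x_0+3\delta]$. Then $h_1(x_0)=h_2(x_0)$.
   Context: The concave majorant of $g$ on an interval $I$ is $h(x_0)=\inf\{ax_0+b: ax+b\geq g(x)\text{ for all }x\in I\}$ for $x_0\in I$. *)

From HB Require Import structures.
From mathcomp Require Import all_boot all_order all_algebra.
From mathcomp Require Import all_classical all_reals.
Set Implicit Arguments. Unset Strict Implicit. Unset Printing Implicit Defensive.
Import Order.TTheory GRing.Theory Num.Theory.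
Local Open Scope classical_set_scope.
Local Open Scope ring_scope.

Definition concave_majorant (R : realType) (I : set R) (g : R -> R) (x0 : R) : R :=
  inf [set y : R | exists a b : R,
         (forall x, I x -> g x <= a * x + b) /\ y = a * x0 + b].

(* Write e(x) = a x + b + x^2/2 for the gap between an affine function and
   -x^2/2.  Any affine majorant of g on the window J = [x0 - 3d, x0 + 3d]
   has e >= -d^2/4 on J; if moreover its value at x0 does not exceed that of
   the tangent majorant -x0 x + x0^2/2 + d^2/4, then e(x0) <= d^2/4, so the
   slope of e at x0 is at most d in absolute value and, e being a parabola of
   curvature 1, e >= d^2/4 >= g(x) + x^2/2 outside J.  Such majorants thus
   extend to [l, r], while the remaining ones lie above the tangent majorant,
   which is itself a majorant on [l, r]: the two infima coincide. *)

From HB Require Import structures.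
From mathcomp Require Import all_boot all_order all_algebra.
From mathcomp Require Import all_classical all_reals.
From mathcomp Require Import lra.
Set Implicit Arguments. Unset Strict Implicit. Unset Printing Implicit Defensive.
Import Order.TTheory GRing.Theory Num.Theory.
Local Open Scope classical_set_scope.
Local Open Scope ring_scope.

Definition affine_majorant (R : numDomainType) (I : set R) (g : R -> R)
    (a b : R) : Prop :=
  forall x, I x -> g x <= a * x + b.

Lemma affine_majorant_sub (R : numDomainType) (I J : set R) (g : R -> R)
    (a b : R) :
  I `<=` J -> affine_majorant J g a b -> affine_majorant I g a b.
Proof. by move=> IJ gJ x /IJ /gJ. Qed.

Section ConcaveMajorant.
Variables (R : realType) (I : set R) (g : R -> R) (x0 : R).

Lemma concave_majorant_le (a b : R) :
  I x0 -> affine_majorant I g a b -> concave_majorant I g x0 <= a * x0 + b.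
Proof.
move=> Ix0 gab; apply: ge_inf; last by exists a, b.
by exists (g x0) => _ [a' [b' [gab' ->]]]; exact: gab'.
Qed.

Lemma concave_majorant_ge (y : R) :
  (exists a b, affine_majorant I g a b) ->
  (forall a b, affine_majorant I g a b -> y <= a * x0 + b) ->
  y <= concave_majorant I g x0.
Proof.
move=> [a [b gab]] ley; apply: lb_le_inf; first by exists (a * x0 + b), a, b.
by move=> _ [a' [b' [gab' ->]]]; exact: ley.
Qed.

End ConcaveMajorant.

Lemma concave_majorant_local (R : realType) (I J : set R) (g : R -> R)
    (x0 a0 b0 : R) :
  I x0 -> I `<=` J -> affine_majorant J g a0 b0 ->
  (forall a b, affine_majorant I g a b -> a * x0 + b <= a0 * x0 + b0 ->
     affine_majorant J g a b) ->
  concave_majorant J g x0 = concave_majorant I g x0.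
Proof.
move=> Ix0 IJ gJ0 extend; have Jx0 := IJ x0 Ix0.
apply/le_anti/andP; split.
- apply: concave_majorant_ge => [|a b gab].
    by exists a0, b0; exact: affine_majorant_sub gJ0.
  have [le0|gt0] := leP (a * x0 + b) (a0 * x0 + b0).
    exact/concave_majorant_le/extend.
  exact/(le_trans (concave_majorant_le Jx0 gJ0))/ltW.
- apply: concave_majorant_ge => [|a b gab]; first by exists a0, b0.
  exact/concave_majorant_le/(affine_majorant_sub IJ).
Qed.

Section ParabolaGap.
Variables (R : realFieldType) (d a b x0 : R).
Local Notation e x := (a * x + b + x ^+ 2 / 2).

Lemma parabola_gap_slope :
  0 < d -> e x0 <= d ^+ 2 / 4 -> - (d ^+ 2 / 4) <= e (x0 + d) ->
  - (d ^+ 2 / 4) <= e (x0 - d) -> `|a + x0| <= d.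
Proof.
move=> d_gt0 ex0 ex0p ex0m.
have lo : - d * d <= (a + x0) * d by nra.
have hi : (a + x0) * d <= d * d by nra.
by rewrite ler_norml -(ler_pM2r d_gt0) lo -(ler_pM2r d_gt0) hi.
Qed.

Lemma parabola_gap_far :
  0 < d -> - (d ^+ 2 / 4) <= e x0 -> `|a + x0| <= d ->
  forall x, 3 * d <= `|x - x0| -> d ^+ 2 / 4 <= e x.
Proof.
rewrite ler_norml => d_gt0 ex0 /andP[slo shi] x.
by case: (ger0P (x - x0)) => _ far; nra.
Qed.

End ParabolaGap.

Section QuadraticPerturbation.
Variables (R : realFieldType) (delta l r x0 : R) (g : R -> R).
Local Notation window := `[x0 - 3 * delta, x0 + 3 * delta]%classic.
Local Notation g_near :=
  (forall x, l <= x <= r -> `|g x + x ^+ 2 / 2| <= delta ^+ 2 / 4).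

Lemma window_center : 0 < delta -> window x0.
Proof. by move=> ?; rewrite /= in_itv /=; apply/andP; split; lra. Qed.

Lemma window_sub : l + 3 * delta <= x0 <= r - 3 * delta -> window `<=` `[l, r].
Proof.
move=> /andP[? ?] x; rewrite /= !in_itv /= => /andP[? ?].
by apply/andP; split; lra.
Qed.

Lemma tangent_majorant :
  g_near -> affine_majorant `[l, r] g (- x0) (x0 ^+ 2 / 2 + delta ^+ 2 / 4).
Proof.
move=> near x /=; rewrite in_itv /= => /near; rewrite ler_norml => /andP[_ ub].
by have := sqr_ge0 (x - x0); nra.
Qed.

Lemma window_majorant_extends (a b : R) :
  0 < delta -> g_near -> l + 3 * delta <= x0 <= r - 3 * delta ->
  affine_majorant window g a b ->
  a * x0 + b <= - x0 * x0 + (x0 ^+ 2 / 2 + delta ^+ 2 / 4) ->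
  affine_majorant `[l, r] g a b.
Proof.
move=> delta_gt0 near x0_inner gab below.
have gap_lb t : window t -> - (delta ^+ 2 / 4) <= a * t + b + t ^+ 2 / 2.
  move=> Jt; have /= := window_sub x0_inner Jt; rewrite in_itv /= => /near.
  by rewrite ler_norml => /andP[lb _]; have := gab t Jt; lra.
have inJ t : x0 - 3 * delta <= t <= x0 + 3 * delta -> window t.
  by rewrite /= in_itv.
have gap_x0 := gap_lb x0 (window_center delta_gt0).
have gap_x0_ub : a * x0 + b + x0 ^+ 2 / 2 <= delta ^+ 2 / 4.
  by move: below; rewrite mulNr -expr2; lra.
have slope : `|a + x0| <= delta.
  apply: (parabola_gap_slope (b := b)) => //;
  by apply: gap_lb; apply: inJ; apply/andP; split; lra.
move=> x lrx.
have [Jx|notJx] := boolP (x \in `[x0 - 3 * delta, x0 + 3 * delta]).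
  exact: gab.
have far : 3 * delta <= `|x - x0|.
  move: notJx; rewrite in_itv /= negb_and -!ltNge ler_normr.
  by case/orP=> ?; apply/orP; [right|left]; lra.
have := parabola_gap_far delta_gt0 gap_x0 slope far.
by move: lrx => /= /[!in_itv] /near; rewrite ler_norml => /andP[_ ?]; lra.
Qed.

End QuadraticPerturbation.

Theorem mainTheorem15 (R : realType) (delta l r : R) (g : R -> R) (x0 : R) :
  0 < delta ->
  (forall x, l <= x <= r -> `|g x + x ^+ 2 / 2| <= delta ^+ 2 / 4) ->
  l + 3 * delta <= x0 <= r - 3 * delta ->
  concave_majorant `[l, r] g x0 =
  concave_majorant `[x0 - 3 * delta, x0 + 3 * delta] g x0.
Proof.
move=> delta_gt0 g_near x0_inner.
apply: (concave_majorant_local (a0 := - x0)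
          (b0 := x0 ^+ 2 / 2 + delta ^+ 2 / 4)).
- exact: window_center.
- exact: window_sub.
- exact: tangent_majorant.
- by move=> a b; exact: window_majorant_extends.
Qed.
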